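(* Let $S=(N,M_0)$ be a live H1S system. Then $S$ is reversible if and only if $S$ enables a T-sequence.
   Context: A Petri net is $N=(P,T,W)$ with finite disjoint sets $P$, $T$ and weights $W:(P\times T)\cup(T\times P)\to\mathbb{N}$; incidence matrix $I(p,t)=W(t,p)-W(p,t)$. Transition $t$ is enabled at $M$ if $M(p)\ge W(p,t)$ for all $p$; firing yields $M+I[\cdot,t]$. A system is live if for every transition $t$ and every reachable marking $M'$ some marking reachable from $M'$ enables $t$; it is reversible if $M_0$ is reachable from every marking reachable from $M_0$. A place is shared if it has at least two output transitions; an H1S net is a homogeneous net (for each place, all its output arc weights are equal) with at most one shared place. A T-sequence of $S$ is a firing sequence $\sigma$ feasible from $M_0$ containing every transition of $T$ and such that $I\cdot\mathbf{P}(\sigma)=0$, where $\mathbf{P}(\sigma)$ is its Parikh vector. *)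

From mathcomp Require Import all_boot all_order all_algebra.
Set Implicit Arguments. Unset Strict Implicit. Unset Printing Implicit Defensive.
Import GRing.Theory Num.Theory.

(* A Petri net N = (P, T, W): P, T finite types, weights split into
   Wpt : P -> T -> nat  (= W(p,t), arcs place -> transition) and
   Wtp : T -> P -> nat  (= W(t,p), arcs transition -> place). *)
Section PetriNet.
Variables (P T : finType) (Wpt : P -> T -> nat) (Wtp : T -> P -> nat).

Definition marking := {ffun P -> nat}.

Definition incidence (p : P) (t : T) : int := (Wtp t p)%:Z - (Wpt p t)%:Z.

Definition enabled (M : marking) (t : T) : bool := [forall p, Wpt p t <= M p].

(* firing t at M (meaningful when t enabled): M + I[.,t] *)
Definition fire (M : marking) (t : T) : marking :=
  [ffun p => M p - Wpt p t + Wtp t p].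

Fixpoint feasible (M : marking) (s : seq T) : bool :=
  if s is t :: s' then enabled M t && feasible (fire M t) s' else true.

Fixpoint fire_seq (M : marking) (s : seq T) : marking :=
  if s is t :: s' then fire_seq (fire M t) s' else M.

Definition reachable (M M' : marking) : Prop :=
  exists s : seq T, feasible M s /\ fire_seq M s = M'.

Definition live (M0 : marking) : Prop :=
  forall (t : T) (M' : marking), reachable M0 M' ->
    exists M'', reachable M' M'' /\ enabled M'' t.

Definition reversible (M0 : marking) : Prop :=
  forall M' : marking, reachable M0 M' -> reachable M' M0.

Definition homogeneous : Prop :=
  forall (p : P) (t t' : T), 0 < Wpt p t -> 0 < Wpt p t' -> Wpt p t = Wpt p t'.

Definition shared (p : P) : bool := 1 < #|[set t : T | 0 < Wpt p t]|.

Definition H1S : Prop :=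
  homogeneous /\ forall p q : P, shared p -> shared q -> p = q.

Definition parikh (s : seq T) (t : T) : nat := count_mem t s.

Definition T_sequence (M0 : marking) (s : seq T) : Prop :=
  [/\ feasible M0 s,
      (forall t : T, t \in s) &
      (forall p : P, (\sum_(t : T) incidence p t * (parikh s t)%:Z)%R = 0%R)].

End PetriNet.

From mathcomp Require Import all_boot all_order all_algebra.
From mathcomp Require Import zify.
Set Implicit Arguments. Unset Strict Implicit. Unset Printing Implicit Defensive.
Import GRing.Theory Num.Theory.

(* Forward: liveness and reversibility give, for every transition, a cycle
   through it; their concatenation is a T-sequence by the state equation.
   Backward: let sigma be a T-sequence (so M0 -sigma-> M0) and M0 -tau-> M'.
   From M' walk along a repetition w of sigma, firing the next transition of w
   only when the history (tau followed by the walk) has not used it more often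
   than the prefix of w.  An unshared place feeds a single transition, whose count in the
   history then equals its count in the prefix, so by the state equation it holds
   as many tokens as after that prefix; only the unique shared place can block.
   While it blocks, liveness and homogeneity let us fire transitions that avoid
   its outputs until it holds enough tokens.  The history then dominates w while
   staying below w on the outputs of the shared place; walking along a further
   repetition of sigma nothing can block any more, and the state equation
   identifies the end marking with M0. *)

Section FiringSequences.
Variables (P T : finType) (Wpt : P -> T -> nat) (Wtp : T -> P -> nat).

Local Notation enabled := (enabled Wpt).
Local Notation fire := (fire Wpt Wtp).
Local Notation feasible := (feasible Wpt Wtp).
Local Notation fire_seq := (fire_seq Wpt Wtp).
Local Notation reachable := (reachable Wpt Wtp).
Local Notation shared := (shared Wpt).
Local Notation live := (live Wpt Wtp).
Local Notation reversible := (reversible Wpt Wtp).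
Local Notation T_sequence := (T_sequence Wpt Wtp).

Lemma feasible_cat M s1 s2 :
  feasible M (s1 ++ s2) = feasible M s1 && feasible (fire_seq M s1) s2.
Proof. by elim: s1 M => [|t s IH] M //=; rewrite IH andbA. Qed.

Lemma fire_seq_cat M s1 s2 : fire_seq M (s1 ++ s2) = fire_seq (fire_seq M s1) s2.
Proof. by elim: s1 M => [|t s IH] M //=. Qed.

Lemma feasible_rcons M s t :
  feasible M (rcons s t) = feasible M s && enabled (fire_seq M s) t.
Proof. by rewrite -cats1 feasible_cat /= andbT. Qed.

Lemma reachable_refl M : reachable M M.
Proof. by exists [::]. Qed.

Lemma reachable_trans M1 M2 M3 :
  reachable M1 M2 -> reachable M2 M3 -> reachable M1 M3.
Proof.
move=> [s1 [h1 <-]] [s2 [h2 <-]]; exists (s1 ++ s2).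
by rewrite feasible_cat fire_seq_cat h1 h2.
Qed.

Lemma reachable_fire_seq M s : feasible M s -> reachable M (fire_seq M s).
Proof. by exists s. Qed.

Lemma parikh_cat (s1 s2 : seq T) t : parikh (s1 ++ s2) t = parikh s1 t + parikh s2 t.
Proof. exact: count_cat. Qed.

Lemma parikh_rcons (s : seq T) y t : parikh (rcons s y) t = parikh s t + (y == t).
Proof. by rewrite -cats1 parikh_cat /parikh /= eq_sym addn0. Qed.

Lemma parikh_gt0 (s : seq T) t : (0 < parikh s t) = (t \in s).
Proof. by rewrite /parikh -has_count has_pred1. Qed.

Lemma parikh_repeat K (s : seq T) t : parikh (flatten (nseq K s)) t = parikh s t * K.
Proof. by rewrite /parikh count_flatten map_nseq sumn_nseq. Qed.

Definition parikh_le (s s' : seq T) := forall t, parikh s t <= parikh s' t.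

Definition shared_parikh_le (s s' : seq T) :=
  forall q t, shared q -> 0 < Wpt q t -> parikh s t <= parikh s' t.

Lemma fire_incidence M t p : enabled M t ->
  ((fire M t p)%:Z = (M p)%:Z + incidence Wpt Wtp p t)%R.
Proof. by move/forallP/(_ p); rewrite ffunE /incidence; lia. Qed.

Lemma state_equation M s p : feasible M s ->
  ((fire_seq M s p)%:Z
    = (M p)%:Z + \sum_t incidence Wpt Wtp p t * (parikh s t)%:Z)%R.
Proof.
elim: s M => [|y s IH] M /=.
  by move=> _; rewrite big1 ?addr0 // => t _; rewrite mulr0.
move=> /andP[en_y feas_s]; rewrite IH // fire_incidence // -addrA; congr (_ + _)%R.
under [RHS]eq_bigr => t _ do rewrite [parikh _ _]/= PoszD mulrDr.
rewrite big_split /=; congr (_ + _)%R.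
rewrite (bigD1 y) //= eqxx mulr1 big1 ?addr0 // => t /negbTE.
by rewrite eq_sym => ->; rewrite mulr0.
Qed.

Lemma fire_seq_parikh_eq M u v : feasible M u -> feasible M v ->
  parikh u =1 parikh v -> fire_seq M u = fire_seq M v.
Proof.
move=> feas_u feas_v eq_uv; apply/ffunP => p; apply/eqP.
rewrite -eqz_nat !state_equation //.
by under eq_bigr => t _ do rewrite eq_uv.
Qed.

(* Only the output transitions of [q] consume from it, so firing the other
   transitions more often leaves at least as many tokens in [q]. *)
Lemma fire_seq_place_mono M u v q : feasible M u -> feasible M v -> parikh_le u v ->
  (forall t, 0 < Wpt q t -> parikh v t <= parikh u t) ->
  fire_seq M u q <= fire_seq M v q.
Proof.
move=> feas_u feas_v le_uv out_vu; rewrite -lez_nat !state_equation //.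
rewrite lerD2l; apply: ler_sum => t _.
have [Wqt0|/out_vu le_vu] := posnP (Wpt q t).
  rewrite ler_wpM2l ?lez_nat //.
  by rewrite /incidence Wqt0 subr0.
by have /eqP-> : parikh u t == parikh v t by rewrite eqn_leq le_uv.
Qed.

Lemma unshared_output_uniq q x y :
  ~~ shared q -> 0 < Wpt q x -> 0 < Wpt q y -> x = y.
Proof.
move=> unshared_q Wqx Wqy; apply/eqP; apply: contraNT unshared_q => ne_xy.
by apply/card_gt1P; exists x, y; rewrite !inE Wqx Wqy.
Qed.

Lemma input_place_covered M p y v q :
  feasible M (rcons p y) -> feasible M v -> parikh_le p v ->
  (forall x, 0 < Wpt q x -> parikh v x <= parikh p x) ->
  Wpt q y <= fire_seq M v q.
Proof.
rewrite feasible_rcons => /andP[feas_p /forallP/(_ q) cover_q] feas_v le_pv out_vp.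
exact: leq_trans cover_q (fire_seq_place_mono feas_p feas_v le_pv out_vp).
Qed.

Lemma enabled_next_of_shared_inputs M p y v :
  feasible M (rcons p y) -> feasible M v -> parikh_le p v ->
  parikh v y <= parikh p y ->
  (forall q, shared q -> 0 < Wpt q y -> Wpt q y <= fire_seq M v q) ->
  enabled (fire_seq M v) y.
Proof.
move=> feas_py feas_v le_pv le_vpy cover_shared; apply/forallP => q.
have [-> //|Wqy] := posnP (Wpt q y).
have [/cover_shared -> //|unshared_q] := boolP (shared q).
apply: input_place_covered feas_py feas_v le_pv _ => x Wqx.
by rewrite (unshared_output_uniq unshared_q Wqx Wqy).
Qed.

(* [v] is the history fired from [M]; the walk along [p ++ r] has reached the
   end of [p]. *)
Lemma catch_up M p r v :
  feasible M (p ++ r) -> feasible M v ->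
  parikh_le p v -> parikh_le v (p ++ r) -> shared_parikh_le v p ->
  reachable (fire_seq M v) (fire_seq M (p ++ r)).
Proof.
elim: r p v => [|y r IH] p v feas_w feas_v le_pv le_vw shared_vp.
  rewrite cats0 in feas_w le_vw *.
  suff -> : fire_seq M v = fire_seq M p by apply: reachable_refl.
  by apply: fire_seq_parikh_eq => // t; apply/eqP; rewrite eqn_leq le_vw le_pv.
have feas_py : feasible M (rcons p y).
  by move: feas_w; rewrite -cat_rcons feasible_cat => /andP[].
have shared_vpy : shared_parikh_le v (rcons p y).
  move=> q t sh Wqt; rewrite parikh_rcons.
  exact: leq_trans (shared_vp q t sh Wqt) (leq_addr _ _).
rewrite -cat_rcons in feas_w le_vw *.
have [lt_pvy|le_vpy] := ltnP (parikh p y) (parikh v y).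
  apply: IH => // t; rewrite parikh_rcons.
  by case: eqP => [<-|_]; rewrite ?addn1 ?addn0.
have en_y : enabled (fire_seq M v) y.
  apply: (enabled_next_of_shared_inputs feas_py feas_v le_pv le_vpy) => q sh_q Wqy.
  exact: input_place_covered feas_py feas_v le_pv (shared_vp q ^~ sh_q).
apply: reachable_trans (_ : reachable _ (fire_seq M (rcons v y))) _.
  by rewrite -cats1 fire_seq_cat; exists [:: y]; rewrite /= en_y.
have feas_vy : feasible M (rcons v y) by rewrite feasible_rcons feas_v.
apply: IH => // [t|t|q t sh Wqt]; rewrite !parikh_rcons.
- by rewrite leq_add2r le_pv.
- case: eqP => [<-|_]; last by rewrite addn0.
  have := le_vw y; rewrite parikh_cat parikh_rcons eqxx; lia.
- by rewrite leq_add2r (shared_vp q t sh Wqt).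
Qed.

(* Stop [s] just before the first output transition of [q] fires: by homogeneity
   it needs exactly [Wpt q y] tokens in [q]. *)
Lemma output_free_prefix_covers M s y q :
  homogeneous Wpt -> feasible M s -> enabled (fire_seq M s) y -> 0 < Wpt q y ->
  exists s1, [/\ feasible M s1, (forall x, x \in s1 -> Wpt q x = 0)
               & Wpt q y <= fire_seq M s1 q].
Proof.
move=> hom; elim: s M => [|x s IH] M /=.
  by move=> _ /forallP/(_ q) cover_q _; exists [::].
move=> /andP[en_x feas_s] en_y Wqy.
have [Wqx0|Wqx] := posnP (Wpt q x).
  have [s1 [feas_s1 out_free cover_q]] := IH _ feas_s en_y Wqy.
  exists (x :: s1); split => //=; first by rewrite en_x.
  by move=> z; rewrite inE => /orP[/eqP->|/out_free].
exists [::]; split => //=.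
by move/forallP/(_ q): en_x; rewrite (hom q y x Wqy Wqx).
Qed.

Lemma enable_next_avoiding_shared M0 p y v :
  H1S Wpt -> live M0 ->
  feasible M0 (rcons p y) -> feasible M0 v -> parikh_le p v ->
  parikh v y <= parikh p y ->
  exists s, [/\ feasible (fire_seq M0 v) s,
                forall q x, shared q -> 0 < Wpt q x -> parikh s x = 0
              & enabled (fire_seq M0 (v ++ s)) y].
Proof.
move=> [hom uniq_shared] live_M0 feas_py feas_v le_pv le_vpy.
case: (pickP [pred q | shared q && (0 < Wpt q y)]) => [q /andP[sh_q Wqy]|no_shared].
  have [_ [[s [feas_s <-]] en_y]] := live_M0 y _ (reachable_fire_seq feas_v).
  have [s1 [feas_s1 out_free cover_q]] := output_free_prefix_covers hom feas_s en_y Wqy.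
  have avoid_shared q' x : shared q' -> 0 < Wpt q' x -> parikh s1 x = 0.
    move=> sh_q'; rewrite (uniq_shared _ _ sh_q' sh_q) => Wqx.
    by apply/count_memPn/negP => /out_free; lia.
  exists s1; split => //.
  have feas_vs1 : feasible M0 (v ++ s1) by rewrite feasible_cat feas_v.
  apply: (enabled_next_of_shared_inputs feas_py feas_vs1).
  - by move=> t; rewrite parikh_cat (leq_trans (le_pv t) (leq_addr _ _)).
  - by rewrite parikh_cat (avoid_shared q) ?addn0.
  - by move=> q' sh_q' _; rewrite (uniq_shared _ _ sh_q' sh_q) fire_seq_cat.
exists [::]; rewrite cats0; split => //.
apply: (enabled_next_of_shared_inputs feas_py feas_v le_pv le_vpy) => q sh_q Wqy.
by have := no_shared q; rewrite /= sh_q Wqy.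
Qed.

(* The same walk, but now the shared place may block it. *)
Lemma overtake M0 p r v : H1S Wpt -> live M0 ->
  feasible M0 (p ++ r) -> feasible M0 v ->
  parikh_le p v -> shared_parikh_le v (p ++ r) ->
  exists2 u, feasible (fire_seq M0 v) u &
    parikh_le (p ++ r) (v ++ u) /\ shared_parikh_le (v ++ u) (p ++ r).
Proof.
move=> H1S_N live_M0.
elim: r p v => [|y r IH] p v feas_w feas_v le_pv shared_vw.
  by rewrite cats0 in shared_vw *; exists [::]; rewrite ?cats0.
rewrite -cat_rcons in feas_w shared_vw *.
have feas_py : feasible M0 (rcons p y).
  by move: feas_w; rewrite feasible_cat => /andP[].
have [lt_pvy|le_vpy] := ltnP (parikh p y) (parikh v y).
  apply: IH => // t; rewrite parikh_rcons.
  by case: eqP => [<-|_]; rewrite ?addn1 ?addn0.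
have [s [feas_s avoid_s en_y]] :=
  enable_next_avoiding_shared H1S_N live_M0 feas_py feas_v le_pv le_vpy.
set v' := rcons (v ++ s) y.
have feas_v' : feasible M0 v'.
  by rewrite feasible_rcons feasible_cat feas_v feas_s en_y.
have le_pv' : parikh_le (rcons p y) v'.
  move=> t; rewrite !parikh_rcons parikh_cat leq_add2r.
  exact: leq_trans (le_pv t) (leq_addr _ _).
have shared_v'w : shared_parikh_le v' (rcons p y ++ r).
  move=> q t sh_q Wqt; rewrite parikh_rcons parikh_cat (avoid_s q t sh_q Wqt) addn0.
  case: eqP Wqt => [<-|_] Wqt; last by rewrite addn0 (shared_vw q t sh_q Wqt).
  have := shared_vw q y sh_q Wqt; rewrite parikh_cat parikh_rcons eqxx; lia.
have [u feas_u] := IH (rcons p y) v' feas_w feas_v' le_pv' shared_v'w.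
have e_v' : v' = v ++ rcons s y by rewrite /v' rcons_cat.
rewrite e_v' -catA; exists (rcons s y ++ u) => //.
move: feas_v' feas_u; rewrite e_v' feasible_cat fire_seq_cat => /andP[_ feas_sy].
by rewrite feasible_cat feas_sy.
Qed.

Definition cyclic_run M s := feasible M s /\ fire_seq M s = M.

Lemma cyclic_run_cat M s1 s2 :
  cyclic_run M s1 -> cyclic_run M s2 -> cyclic_run M (s1 ++ s2).
Proof.
move=> [feas1 back1] [feas2 back2]; split.
  by rewrite feasible_cat feas1 back1.
by rewrite fire_seq_cat back1.
Qed.

Lemma cyclic_run_repeat M s K :
  cyclic_run M s -> cyclic_run M (flatten (nseq K s)).
Proof. by move=> cyc; elim: K => [|K IH] //=; exact: cyclic_run_cat. Qed.

Lemma live_reversible_cyclic_run M : live M -> reversible M ->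
  exists s, cyclic_run M s /\ forall t, t \in s.
Proof.
move=> live_M rev_M.
have through t : exists s, cyclic_run M s /\ t \in s.
  have [_ [[a [feas_a <-]] en_t]] := live_M t M (reachable_refl M).
  have feas_at : feasible M (rcons a t) by rewrite feasible_rcons feas_a.
  have [b [feas_b back]] := rev_M _ (reachable_fire_seq feas_at).
  exists (rcons a t ++ b); split; last by rewrite mem_cat mem_rcons mem_head.
  by split; rewrite ?feasible_cat ?fire_seq_cat ?feas_at.
suff [s [cyc_s all_s]] : exists s, cyclic_run M s /\ {subset enum T <= s}.
  by exists s; split => // t; apply: all_s; rewrite mem_enum.
elim: (enum T) => [|t ts [s [cyc_s sub_s]]]; first by exists [::].
have [s' [cyc_s' t_s']] := through t.
exists (s' ++ s); split; first exact: cyclic_run_cat.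
by move=> x; rewrite inE mem_cat => /orP[/eqP->|/sub_s->]; rewrite ?t_s' ?orbT.
Qed.

Lemma cyclic_run_T_sequence M s :
  cyclic_run M s -> (forall t, t \in s) -> T_sequence M s.
Proof.
move=> [feas_s back] all_s; split => // p.
by apply: (@addrI _ (Posz (M p))); rewrite addr0 -state_equation // back.
Qed.

Lemma T_sequence_cyclic_run M s : T_sequence M s -> cyclic_run M s.
Proof.
move=> [feas_s _ sum0]; split => //; apply/ffunP => p; apply/eqP.
by rewrite -eqz_nat state_equation // sum0 addr0.
Qed.

Lemma T_sequence_reversible M0 sigma : H1S Wpt -> live M0 ->
  T_sequence M0 sigma -> reversible M0.
Proof.
move=> H1S_N live_M0 T_sigma M' [tau [feas_tau <-]].
have cyc_sigma := T_sequence_cyclic_run T_sigma.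
have [_ all_sigma _] := T_sigma.
have repeat_ge (s : seq T) t : parikh s t <= parikh (flatten (nseq (size s) sigma)) t.
  rewrite parikh_repeat (leq_trans (count_size _ _)) // leq_pmull //.
  by rewrite parikh_gt0.
set w1 := flatten (nseq (size tau) sigma).
have [u feas_u [le_w1v shared_vw1]] :=
  @overtake M0 [::] w1 tau H1S_N live_M0 (cyclic_run_repeat _ cyc_sigma).1 feas_tau
    (fun t => leq0n _) (fun q t _ _ => repeat_ge tau t).
set v := tau ++ u; set w2 := flatten (nseq (size v) sigma).
have [feas_w back_w] : cyclic_run M0 (w1 ++ w2).
  by apply: cyclic_run_cat; apply: cyclic_run_repeat.
have feas_v : feasible M0 v by rewrite feasible_cat feas_tau.
apply: reachable_trans (_ : reachable _ (fire_seq M0 v)) _.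
  by rewrite fire_seq_cat; exact: reachable_fire_seq.
rewrite -{2}back_w; apply: catch_up => // t.
by rewrite parikh_cat (leq_trans (repeat_ge v t)) ?leq_addl.
Qed.

End FiringSequences.

Theorem mainTheorem9 (P T : finType) (Wpt : P -> T -> nat) (Wtp : T -> P -> nat)
  (M0 : marking P) :
  H1S Wpt -> live Wpt Wtp M0 ->
  (reversible Wpt Wtp M0 <-> exists s : seq T, T_sequence Wpt Wtp M0 s).
Proof.
move=> H1S_N live_M0; split => [rev_M0|[s T_s]].
  have [s [cyc_s all_s]] := live_reversible_cyclic_run live_M0 rev_M0.
  by exists s; exact: cyclic_run_T_sequence.
exact: T_sequence_reversible T_s.
Qed.
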